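(* Let $n, m \ge 1$, let $\boldsymbol{y} \in \{0,1\}^n$ be a (true) binary label vector, and let $\boldsymbol{w}_1, \ldots, \boldsymbol{w}_m \in [0,1]^n$ be weak signals (non-abstaining, i.e. each labels all $n$ examples). For each $i$, let $\epsilon_i = \frac{1}{n}\left( (\mathbf{1} - 2\boldsymbol{w}_i)^\top \boldsymbol{y} + \boldsymbol{w}_i^\top \mathbf{1}\right)$ be the true expected error rate of $\boldsymbol{w}_i$ with respect to $\boldsymbol{y}$, and set $\boldsymbol{\epsilon} = (\epsilon_1, \ldots, \epsilon_m)^\top$. Let $\boldsymbol{A} \in \mathbb{R}^{m \times n}$ be the matrix whose $i$-th row is $(\mathbf{1} - 2\boldsymbol{w}_i)^\top$, and let $\boldsymbol{c} \in \mathbb{R}^m$ have entries $c_i = n\epsilon_i - \boldsymbol{w}_i^\top \mathbf{1}$ (so that $\boldsymbol{A}\boldsymbol{y} = \boldsymbol{c}$). Then for any $\tilde{\boldsymbol{y}} \in [0,1]^n$ with $\boldsymbol{A}\tilde{\boldsymbol{y}} = \boldsymbol{c}$, $$\|\tilde{\boldsymbol{y}} - (\mathbf{1} - \boldsymbol{y})\| \ge n \,\|\boldsymbol{A}^+ (\mathbf{1} - 2\boldsymbol{\epsilon})\|,$$ where $\|\cdot\|$ is the Euclidean norm and $\boldsymbol{A}^+$ is the Moore–Penrose pseudoinverse of $\boldsymbol{A}$.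
   Context: Setting: binary classification with $n$ unlabeled examples and $m$ weak supervision signals. $\mathbf{1}$ denotes the all-ones vector of the appropriate dimension ($\mathbf{1} \in \mathbb{R}^n$ in $\boldsymbol{w}_i^\top\mathbf{1}$, $\mathbf{1}-\boldsymbol{y}$, and $\mathbf{1} - 2\boldsymbol{w}_i$; $\mathbf{1} \in \mathbb{R}^m$ in $\mathbf{1} - 2\boldsymbol{\epsilon}$). The weak signals may be soft (entries in $[0,1]$) or hard (entries in $\{0,1\}$). The error rate $\epsilon_i$ equals $\frac{1}{n}\left(\boldsymbol{w}_i^\top(\mathbf{1}-\boldsymbol{y}) + (\mathbf{1}-\boldsymbol{w}_i)^\top \boldsymbol{y}\right)$. *)

From HB Require Import structures.
From mathcomp Require Import all_boot all_order all_algebra.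
Set Implicit Arguments. Unset Strict Implicit. Unset Printing Implicit Defensive.
Import Order.TTheory GRing.Theory Num.Theory.
Local Open Scope ring_scope.

Definition ones (R : rcfType) (k : nat) : 'cV[R]_k := const_mx 1.

Definition enorm (R : rcfType) (k : nat) (v : 'cV[R]_k) : R :=
  Num.sqrt (\sum_(j < k) v j 0 ^+ 2).

Definition is_MP_pinv (R : rcfType) (m n : nat)
    (A : 'M[R]_(m, n)) (X : 'M[R]_(n, m)) : Prop :=
  [/\ A *m X *m A = A, X *m A *m X = X,
      (A *m X)^T = A *m X & (X *m A)^T = X *m A].

Definition err_rate (R : rcfType) (n : nat) (w y : 'cV[R]_n) : R :=
  n%:R^-1 * (((ones R n - 2%:R *: w)^T *m y) 0 0 + (w^T *m ones R n) 0 0).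

(* If A y = c then A ~y = c as well, so d := ~y - (1 - y) satisfies
   A d = c - A 1 + c = -n (1 - 2 eps).  Since A^+ A is the orthogonal
   projection onto the row space of A, it does not increase Euclidean norms:
   n |A^+ (1 - 2 eps)| = |A^+ A d| <= |d|. *)
From HB Require Import structures.
From mathcomp Require Import all_boot all_order all_algebra.
From mathcomp Require Import ring.
Import Order.TTheory GRing.Theory Num.Theory.
Local Open Scope ring_scope.

Section EuclideanNorm.

Variables (R : rcfType) (k : nat).
Implicit Types (u v e : 'cV[R]_k) (P : 'M[R]_k).

Lemma enormE v : enorm v = Num.sqrt ((v^T *m v) 0 0).
Proof. by rewrite /enorm mxE; congr Num.sqrt; apply: eq_bigr => j _; rewrite !mxE. Qed.

Lemma trmx_mul_self_ge0 v : 0 <= (v^T *m v) 0 0.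
Proof. by rewrite mxE; apply: sumr_ge0 => j _; rewrite mxE -expr2 sqr_ge0. Qed.

Lemma enormZ (a : R) v : enorm (a *: v) = `|a| * enorm v.
Proof.
rewrite /enorm -sqrtr_sqr -sqrtrM ?sqr_ge0 // mulr_sumr; congr Num.sqrt.
by apply: eq_bigr => j _; rewrite mxE exprMn.
Qed.

Lemma enormN v : enorm (- v) = enorm v.
Proof. by rewrite -scaleN1r enormZ normrN1 mul1r. Qed.

Lemma enorm_le_addr_orthogonal u e : u^T *m e = 0 -> enorm u <= enorm (u + e).
Proof.
move=> ue0; have eu0 : e^T *m u = 0 by rewrite -[e^T *m u]trmxK trmx_mul trmxK ue0 trmx0.
rewrite !enormE; apply: ler_wsqrtr.
rewrite (raddfD (@trmx R k 1)) mulmxDl !mulmxDr ue0 eu0 addr0 add0r [X in _ <= X]mxE.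
by rewrite lerDl trmx_mul_self_ge0.
Qed.

Lemma enorm_proj_le P v : P^T = P -> P *m P = P -> enorm (P *m v) <= enorm v.
Proof.
move=> PT PP; have -> : enorm v = enorm (P *m v + (v - P *m v)) by rewrite addrC subrK.
apply: enorm_le_addr_orthogonal.
by rewrite mulmxBr trmx_mul PT -!mulmxA (mulmxA P) PP subrr.
Qed.

End EuclideanNorm.

Lemma enorm_pinv_mul_le (R : rcfType) (m n : nat) (A : 'M[R]_(m, n)) X d :
  is_MP_pinv A X -> enorm (X *m (A *m d)) <= enorm d.
Proof.
case=> _ XAX _ XAT; rewrite mulmxA; apply: enorm_proj_le => //.
by rewrite mulmxA XAX.
Qed.

Section WeakSignal.

Variables (R : rcfType) (n : nat) (w y : 'cV[R]_n).

Lemma signal_mul_onesE :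
  ((ones R n - 2%:R *: w)^T *m ones R n) 0 0 = n%:R - 2%:R * (w^T *m ones R n) 0 0.
Proof.
have -> : n%:R = \sum_(j < n) 1 :> R by rewrite sumr_const card_ord.
rewrite !mxE mulr_sumr -sumrB.
by apply: eq_bigr => j _; rewrite !mxE !mulr1.
Qed.

Lemma signal_mul_labelsE : (0 < n)%N ->
  ((ones R n - 2%:R *: w)^T *m y) 0 0 = n%:R * err_rate w y - (w^T *m ones R n) 0 0.
Proof.
move=> n_gt0; have n_neq0 : n%:R != 0 :> R by rewrite pnatr_eq0 -lt0n.
by rewrite /err_rate mulrA divff // mul1r addrK.
Qed.

End WeakSignal.

Lemma signal_matrix_mulE (R : rcfType) (m n : nat) (w : 'I_m -> 'cV[R]_n)
    (v : 'cV[R]_n) i :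
  ((\matrix_(i < m, j < n) (1 - 2%:R * w i j 0)) *m v) i 0
    = ((ones R n - 2%:R *: w i)^T *m v) 0 0.
Proof. by rewrite !mxE; apply: eq_bigr => j _; rewrite !mxE. Qed.

Theorem theorem1 (R : rcfType) (n m : nat) (hn : (0 < n)%N) (hm : (0 < m)%N)
    (y : 'cV[R]_n) (hy : forall j, y j 0 = 0 \/ y j 0 = 1)
    (w : 'I_m -> 'cV[R]_n) (hw : forall i j, 0 <= w i j 0 <= 1)
    (A : 'M[R]_(m, n))
    (hA : A = \matrix_(i < m, j < n) (1 - 2%:R * w i j 0))
    (eps : 'cV[R]_m) (heps : eps = \col_(i < m) err_rate (w i) y)
    (c : 'cV[R]_m)
    (hc : c = \col_(i < m) (n%:R * eps i 0 - ((w i)^T *m ones R n) 0 0))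
    (Aplus : 'M[R]_(n, m)) (hAplus : is_MP_pinv A Aplus)
    (yt : 'cV[R]_n) (hyt : forall j, 0 <= yt j 0 <= 1)
    (hAyt : A *m yt = c) :
  n%:R * enorm (Aplus *m (ones R m - 2%:R *: eps))
    <= enorm (yt - (ones R n - y)).
Proof.
have Ay : A *m y = c.
  apply/matrixP => i k; rewrite ord1 hA signal_matrix_mulE signal_mul_labelsE //.
  by rewrite hc heps !mxE.
have A1 : A *m ones R n = \col_i (n%:R - 2%:R * ((w i)^T *m ones R n) 0 0).
  by apply/matrixP => i k; rewrite ord1 hA signal_matrix_mulE signal_mul_onesE [RHS]mxE.
set u := ones R m - 2%:R *: eps.
have Ad : A *m (yt - (ones R n - y)) = - (n%:R *: u).
  rewrite !mulmxBr hAyt Ay A1 hc /u heps.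
  by apply/matrixP => i k; rewrite ord1 !mxE; ring.
rewrite -[n%:R]ger0_norm // -enormZ scalemxAr -[_ *: u]opprK -Ad mulmxN enormN.
exact: enorm_pinv_mul_le.
Qed.
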